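(* Let $N$ be a finitely generated torsion-free nilpotent group and let $\phi\in\mathrm{Aut}(N)$ be homologically trivial, i.e. $\phi$ induces the identity on $H_1(N,\mathbb{Z})$. Then $K_{\phi}=1$.
   Context: For a finitely generated group $G$ with finite generating set $S$, $\ell=\ell_S$ denotes word length with respect to $S$. For $\phi\in\mathrm{Aut}(G)$, the entropy of $\phi$ is $K_{\phi}=\max_{s\in S}\lim_{n\to\infty}\ell(\phi^n(s))^{1/n}$; it is independent of $S$. *)

From Stdlib Require Import Reals Lra Lia Arith List Classical ClassicalEpsilon.
Open Scope R_scope.

Record Group := {
  carrier :> Type;
  gmul : carrier -> carrier -> carrier;
  ginv : carrier -> carrier;
  gone : carrier;
  gmul_assoc : forall x y z, gmul x (gmul y z) = gmul (gmul x y) z;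
  gmul_1l : forall x, gmul gone x = x;
  gmul_1r : forall x, gmul x gone = x;
  gmul_Vl : forall x, gmul (ginv x) x = gone;
  gmul_Vr : forall x, gmul x (ginv x) = gone
}.

Arguments gmul {g} _ _.
Arguments ginv {g} _.
Arguments gone {g}.

Section GroupDefs.
Variable G : Group.

Fixpoint gpow (g : G) (n : nat) : G :=
  match n with O => gone | S k => gmul g (gpow g k) end.

Definition torsion_free : Prop :=
  forall (g : G) (n : nat), gpow g (S n) = gone -> g = gone.

Inductive generated (A : G -> Prop) : G -> Prop :=
  | gen_in : forall x, A x -> generated A x
  | gen_one : generated A gone
  | gen_inv : forall x, generated A x -> generated A (ginv x)
  | gen_mul : forall x y, generated A x -> generated A y -> generated A (gmul x y).

Definition commutator (a b : G) : G := gmul (gmul (ginv a) (ginv b)) (gmul a b).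

(* lower central series: gamma 0 = G, gamma (i+1) = [gamma i, G] *)
Fixpoint gamma (i : nat) : G -> Prop :=
  match i with
  | O => fun _ => True
  | S k => generated (fun x => exists a b, gamma k a /\ x = commutator a b)
  end.

Definition nilpotent : Prop := exists c, forall x, gamma c x -> x = gone.

(* words over S ∪ S^{-1}: (true, s) stands for s, (false, s) for s^{-1} *)
Definition word_over (S : list G) (w : list (bool * G)) : Prop :=
  Forall (fun p : bool * G => In (snd p) S) w.

Definition eval_word (w : list (bool * G)) : G :=
  fold_right (fun (p : bool * G) (acc : G) => gmul (if fst p then snd p else ginv (snd p)) acc) gone w.

Definition generates (S : list G) : Prop :=
  forall g : G, exists w, word_over S w /\ eval_word w = g.

Definition has_word_of_length (S : list G) (g : G) (n : nat) : Prop :=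
  exists w, word_over S w /\ length w = n /\ eval_word w = g.

(* word length l_S(g): the least length of a word over S ∪ S^{-1} representing g
   (chosen by classical choice; well defined whenever S generates G). *)
Definition word_length (S : list G) (g : G) : nat :=
  epsilon (inhabits 0%nat)
    (fun n => has_word_of_length S g n /\
              forall m, has_word_of_length S g m -> (n <= m)%nat).

Definition is_hom (f : G -> G) : Prop := forall x y, f (gmul x y) = gmul (f x) (f y).

Definition is_automorphism (f : G -> G) : Prop :=
  is_hom f /\ (forall x y, f x = f y -> x = y) /\ (forall y, exists x, f x = y).

(* phi induces the identity on H_1(G,Z) = G/[G,G] *)
Definition homologically_trivial (f : G -> G) : Prop :=
  forall g : G, gamma 1 (gmul (f g) (ginv g)).

(* real n-th root of a natural number l (with 0^(1/n) = 0) *)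
Definition nat_root (l : nat) (n : nat) : R :=
  match l with O => 0 | _ => Rpower (INR l) (/ INR n) end.

Definition entropy_seq (S : list G) (f : G -> G) (s : G) : nat -> R :=
  fun n => nat_root (word_length S (Nat.iter n f s)) n.

(* K_phi = K, where K_phi = max_{s in S} lim_n l_S(phi^n(s))^(1/n):
   every limit exists, all are <= K, and K is attained. *)
Definition entropy_is (S : list G) (f : G -> G) (K : R) : Prop :=
  (forall s, In s S -> exists l, Un_cv (entropy_seq S f s) l /\ l <= K) /\
  (exists s, In s S /\ Un_cv (entropy_seq S f s) K).

End GroupDefs.

From Stdlib Require Import Reals List Lia Lra Classical ClassicalEpsilon.
From Coquelicot Require Import Coquelicot.

(* Write Delta x = x^-1 phi(x).  Because phi is the identity on G/[G,G],
   Delta maps G into gamma_1, and, using [gamma_i, gamma_j] <= gamma_(i+j+1)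
   (a consequence of the Hall-Witt identity), it maps gamma_k into
   gamma_(k+1) for every k.  The identity phi^(n+1)(x) = phi^n(x) phi^n(Delta x)
   shows that if the phi-orbit of Delta x has polynomially bounded word length
   then so has the orbit of x.  Descending induction along the lower central
   series, which reaches the trivial group, thus bounds every orbit
   polynomially.  The n-th root of a sequence 1 <= l_n <= C (n+1)^d tends to 1,
   while the orbit of the identity gives the limit 0; as N is nontrivial, some
   generator is nontrivial and attains the value 1. *)

Section GroupIdentities.
Variable G : Group.

Lemma gmul_assoc_r (x y z : G) : gmul (gmul x y) z = gmul x (gmul y z).
Proof. now rewrite gmul_assoc. Qed.

Lemma gmul_KVl (x y : G) : gmul (ginv x) (gmul x y) = y.
Proof. now rewrite gmul_assoc, gmul_Vl, gmul_1l. Qed.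

Lemma gmul_KVr (x y : G) : gmul x (gmul (ginv x) y) = y.
Proof. now rewrite gmul_assoc, gmul_Vr, gmul_1l. Qed.

Lemma ginv_unique (x y : G) : gmul x y = gone -> ginv x = y.
Proof.
  intro H. rewrite <- (gmul_1r G (ginv x)), <- H, gmul_assoc, gmul_Vl, gmul_1l.
  reflexivity.
Qed.

Lemma ginv_mul (x y : G) : ginv (gmul x y) = gmul (ginv y) (ginv x).
Proof. apply ginv_unique. rewrite gmul_assoc_r, gmul_KVr. apply gmul_Vr. Qed.

Lemma ginv_inv (x : G) : ginv (ginv x) = x.
Proof. apply ginv_unique. apply gmul_Vl. Qed.

Lemma ginv_one : ginv (@gone G) = gone.
Proof. apply ginv_unique. apply gmul_1l. Qed.

End GroupIdentities.

(* A confluent rewrite system normalizing group words (right-associated,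
   without cancelling pairs); it proves the word identities used below. *)
Global Hint Rewrite gmul_assoc_r gmul_KVl gmul_KVr ginv_mul ginv_inv ginv_one
  gmul_1l gmul_1r gmul_Vl gmul_Vr : gsimp.
Ltac gsimpl := autorewrite with gsimp.

Section LowerCentralSeries.
Variable G : Group.

Definition subgroup (P : G -> Prop) : Prop :=
  P gone /\ (forall x y, P x -> P y -> P (gmul x y)) /\ (forall x, P x -> P (ginv x)).

Definition normal (P : G -> Prop) : Prop :=
  forall x g, P x -> P (gmul (ginv g) (gmul x g)).

Lemma generated_min (A P : G -> Prop) :
  subgroup P -> (forall x, A x -> P x) -> forall x, generated G A x -> P x.
Proof. intros [H1 [H2 H3]] HA x Hx. induction Hx; auto. Qed.

Lemma gamma_subgroup k : subgroup (gamma G k).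
Proof.
  destruct k; simpl; repeat split; intros; auto using gen_mul, gen_inv, gen_one.
Qed.

Lemma gamma_mul k x y : gamma G k x -> gamma G k y -> gamma G k (gmul x y).
Proof. intros; now apply (gamma_subgroup k). Qed.

Lemma gamma_inv k x : gamma G k x -> gamma G k (ginv x).
Proof. intros; now apply (gamma_subgroup k). Qed.

(* Conjugation by g preserves each gamma_k: it permutes the generating commutators. *)
Lemma gamma_normal k : normal (gamma G k).
Proof.
  induction k; intros x g Hx; simpl in *; auto.
  revert Hx. apply (generated_min _ (fun x => generated G _ (gmul (ginv g) (gmul x g)))).
  - repeat split.
    + gsimpl. apply gen_one.
    + intros a b Ha Hb.
      replace (gmul (ginv g) (gmul (gmul a b) g)) with
        (gmul (gmul (ginv g) (gmul a g)) (gmul (ginv g) (gmul b g))) by (gsimpl; reflexivity).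
      now apply gen_mul.
    + intros a Ha.
      replace (gmul (ginv g) (gmul (ginv a) g)) with
        (ginv (gmul (ginv g) (gmul a g))) by (gsimpl; reflexivity).
      now apply gen_inv.
  - intros y [a [b [Ha ->]]]. apply gen_in.
    exists (gmul (ginv g) (gmul a g)), (gmul (ginv g) (gmul b g)).
    split; [now apply IHk|]. unfold commutator. gsimpl. reflexivity.
Qed.

Lemma gamma_comm_l k a b : gamma G k a -> gamma G (S k) (commutator G a b).
Proof. intro H. simpl. apply gen_in. eauto. Qed.

Lemma gamma_comm_r k a b : gamma G k b -> gamma G (S k) (commutator G a b).
Proof.
  intro H. replace (commutator G a b) with (ginv (commutator G b a))
    by (unfold commutator; gsimpl; reflexivity).
  now apply gamma_inv, gamma_comm_l.
Qed.

Lemma hall_witt (x y z : G) :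
  gmul (gmul (ginv y) (gmul (commutator G (commutator G x (ginv y)) z) y))
   (gmul (gmul (ginv z) (gmul (commutator G (commutator G y (ginv z)) x) z))
         (gmul (ginv x) (gmul (commutator G (commutator G z (ginv x)) y) x))) = gone.
Proof. unfold commutator. gsimpl. reflexivity. Qed.

(* For a fixed a, the b with [a,b] in the normal subgroup gamma_k form a subgroup;
   this lets the commutator estimate be checked on generators only. *)
Lemma comm_right_subgroup k a : subgroup (fun b => gamma G k (commutator G a b)).
Proof.
  repeat split.
  - unfold commutator; gsimpl. apply gamma_subgroup.
  - intros b1 b2 H1 H2.
    replace (commutator G a (gmul b1 b2)) with
      (gmul (commutator G a b2) (gmul (ginv b2) (gmul (commutator G a b1) b2)))
      by (unfold commutator; gsimpl; reflexivity).
    apply gamma_mul; auto. now apply gamma_normal.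
  - intros b H.
    replace (commutator G a (ginv b)) with
      (gmul (ginv (ginv b)) (gmul (ginv (commutator G a b)) (ginv b)))
      by (unfold commutator; gsimpl; reflexivity).
    now apply gamma_normal, gamma_inv.
Qed.

(* [gamma_i, gamma_j] <= gamma_(i+j+1), by induction on j via Hall-Witt. *)
Lemma gamma_comm j : forall i a b, gamma G i a -> gamma G j b ->
  gamma G (i + j + 1) (commutator G a b).
Proof.
  induction j as [|j IHj]; intros i a b Ha Hb.
  { replace (i + 0 + 1)%nat with (S i) by lia. now apply gamma_comm_l. }
  revert Hb. simpl gamma at 1.
  apply (generated_min _ (fun b => gamma G (i + S j + 1) (commutator G a b)));
    [apply comm_right_subgroup|].
  intros y [c [d [Hc ->]]].
  set (n := (i + S j + 1)%nat).
  pose proof (hall_witt c (ginv d) a) as HW. rewrite ginv_inv in HW.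
  set (X := commutator G (commutator G c d) a) in HW.
  set (Y := gmul (ginv a) _) in HW. set (Z := gmul (ginv c) _) in HW.
  assert (HY : gamma G n Y).
  { apply gamma_normal. replace n with (S i + j + 1)%nat by (unfold n; lia).
    apply IHj; [apply gamma_comm_r, gamma_inv|]; assumption. }
  assert (HZ : gamma G n Z).
  { apply gamma_normal. replace n with (S (i + j + 1)) by (unfold n; lia).
    apply gamma_comm_l, IHj; [|apply gamma_inv]; assumption. }
  assert (HX : X = gmul (ginv d) (gmul (ginv (gmul Y Z)) d)).
  { rewrite <- (ginv_unique _ _ _ HW). gsimpl. reflexivity. }
  replace (commutator G a (commutator G c d)) with (ginv X)
    by (unfold X, commutator; gsimpl; reflexivity).
  rewrite HX. now apply gamma_inv, gamma_normal, gamma_inv, gamma_mul.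
Qed.

End LowerCentralSeries.

Section Homomorphisms.
Variables (G : Group) (f : G -> G).
Hypothesis f_hom : is_hom G f.

Lemma hom_one : f gone = gone.
Proof.
  pose proof (f_hom gone gone) as E. rewrite gmul_1l in E.
  rewrite <- (gmul_KVl G (f gone) (f gone)), <- E, gmul_Vl. reflexivity.
Qed.

Lemma hom_inv x : f (ginv x) = ginv (f x).
Proof. symmetry. apply ginv_unique. rewrite <- f_hom, gmul_Vr. exact hom_one. Qed.

Lemma hom_comm a b : f (commutator G a b) = commutator G (f a) (f b).
Proof. unfold commutator. now rewrite !f_hom, !hom_inv. Qed.

Lemma iter_hom_one n : Nat.iter n f gone = gone.
Proof. induction n as [|n IH]; simpl; [reflexivity|]. now rewrite IH, hom_one. Qed.

Lemma iter_hom_mul n x y :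
  Nat.iter n f (gmul x y) = gmul (Nat.iter n f x) (Nat.iter n f y).
Proof. induction n as [|n IH]; simpl; [reflexivity|]. now rewrite IH, f_hom. Qed.

(* The "derivative" of f: Delta x = x^-1 f(x), so that f(x) = x Delta(x). *)
Definition Delta (x : G) : G := gmul (ginv x) (f x).

Lemma Delta_mul x y :
  Delta (gmul x y) = gmul (gmul (ginv y) (gmul (Delta x) y)) (Delta y).
Proof. unfold Delta. rewrite f_hom. gsimpl. reflexivity. Qed.

Lemma Delta_inv x : Delta (ginv x) = gmul (ginv (ginv x)) (gmul (ginv (Delta x)) (ginv x)).
Proof. unfold Delta. rewrite hom_inv. gsimpl. reflexivity. Qed.

Lemma Delta_comm a b :
  let z := commutator G a b in
  Delta z = gmul (gmul (ginv z) (gmul (gmul (ginv (Delta a))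
                    (gmul (commutator G a (Delta b)) (Delta a))) z))
              (gmul (commutator G z (gmul (Delta b) (Delta a)))
                    (commutator G (Delta a) (gmul b (Delta b)))).
Proof.
  unfold Delta at 1. rewrite hom_comm.
  replace (f a) with (gmul a (Delta a)) by (unfold Delta; gsimpl; reflexivity).
  replace (f b) with (gmul b (Delta b)) by (unfold Delta; gsimpl; reflexivity).
  unfold commutator. gsimpl. reflexivity.
Qed.

Lemma iter_succ_Delta n x :
  Nat.iter (S n) f x = gmul (Nat.iter n f x) (Nat.iter n f (Delta x)).
Proof.
  rewrite <- iter_hom_mul, Nat.iter_succ_r. f_equal. unfold Delta. gsimpl. reflexivity.
Qed.

Hypothesis f_triv : homologically_trivial G f.

Lemma Delta_gamma1 x : gamma G 1 (Delta x).
Proof.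
  unfold Delta. replace (gmul (ginv x) (f x)) with
    (gmul (ginv x) (gmul (gmul (f x) (ginv x)) x)) by (gsimpl; reflexivity).
  apply gamma_normal, f_triv.
Qed.

(* A homologically trivial endomorphism moves gamma_k into gamma_(k+1):
   Delta is compatible with products and inverses modulo gamma_(k+2), so it
   suffices to treat the generating commutators [a,b] of gamma_(k+1). *)
Lemma Delta_gamma k x : gamma G k x -> gamma G (S k) (Delta x).
Proof.
  revert x. induction k as [|k IHk]; intros x Hx; [apply Delta_gamma1|].
  revert Hx. simpl gamma at 1.
  apply (generated_min _ _ (fun x => gamma G (S (S k)) (Delta x))).
  - repeat split.
    + unfold Delta. rewrite hom_one. gsimpl. apply gamma_subgroup.
    + intros y1 y2 H1 H2. rewrite Delta_mul. now apply gamma_mul; [apply gamma_normal|].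
    + intros y H. rewrite Delta_inv. now apply gamma_normal, gamma_inv.
  - intros y [a [b [Ha ->]]]. rewrite Delta_comm.
    apply gamma_mul; [|apply gamma_mul].
    + apply gamma_normal, gamma_normal.
      replace (S (S k)) with (k + 1 + 1)%nat by lia.
      apply gamma_comm; [assumption | apply Delta_gamma1].
    + apply gamma_comm_l, gamma_comm_l, Ha.
    + apply gamma_comm_l, IHk, Ha.
Qed.

End Homomorphisms.

Section PolynomialGrowth.
Variables (G : Group) (gens : list G).

Definition word_le (g : G) (m : nat) : Prop :=
  exists w, word_over G gens w /\ (length w <= m)%nat /\ eval_word G w = g.

Lemma eval_word_app (w1 w2 : list (bool * G)) :
  eval_word G (w1 ++ w2) = gmul (eval_word G w1) (eval_word G w2).
Proof.
  induction w1 as [|p w1 IH]; simpl; [now rewrite gmul_1l|].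
  rewrite IH. apply gmul_assoc.
Qed.

Lemma word_le_one : word_le gone 0.
Proof. exists nil. repeat split; constructor. Qed.

Lemma word_le_mul x y a b : word_le x a -> word_le y b -> word_le (gmul x y) (a + b).
Proof.
  intros [w1 [H1 [L1 E1]]] [w2 [H2 [L2 E2]]]. exists (w1 ++ w2). split; [|split].
  - now apply Forall_app.
  - rewrite length_app; lia.
  - now rewrite eval_word_app, E1, E2.
Qed.

Lemma word_le_mono x a b : word_le x a -> (a <= b)%nat -> word_le x b.
Proof. intros [w [H [L E]]] Hab. exists w. repeat split; auto. lia. Qed.

Definition poly_orbit (f : G -> G) (x : G) : Prop :=
  exists C d, forall n, word_le (Nat.iter n f x) (C * (n + 1) ^ d).

Hypothesis S_gen : generates G gens.
Variable f : G -> G.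
Hypothesis f_hom : is_hom G f.

Lemma poly_orbit_one : poly_orbit f gone.
Proof.
  exists 0%nat, 0%nat. intro n. rewrite (iter_hom_one G f f_hom). apply word_le_one.
Qed.

(* If Delta x has a polynomial orbit of degree d, then x has one of degree d+1,
   because f^n(x) is x times the product of f^m(Delta x) for m < n. *)
Lemma poly_orbit_Delta x : poly_orbit f (Delta G f x) -> poly_orbit f x.
Proof.
  intros [C [d HB]].
  destruct (S_gen x) as [w0 [Hw0 E0]].
  set (l0 := length w0).
  assert (Hn : forall n, word_le (Nat.iter n f x) (l0 + n * (C * (n + 1) ^ d))).
  { induction n as [|n IH].
    - exists w0. simpl. repeat split; auto. lia.
    - rewrite (iter_succ_Delta G f f_hom). eapply word_le_mono.
      + apply word_le_mul; [exact IH | apply HB].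
      + assert (HP : ((n + 1) ^ d <= (S n + 1) ^ d)%nat) by (apply Nat.pow_le_mono_l; lia).
        revert HP. generalize ((n + 1) ^ d)%nat ((S n + 1) ^ d)%nat. intros P Q HP.
        assert (HCP : (C * P <= C * Q)%nat) by (apply Nat.mul_le_mono_l, HP).
        assert (n * (C * P) <= n * (C * Q))%nat by (apply Nat.mul_le_mono_l, HCP).
        rewrite Nat.mul_succ_l. lia. }
  exists (l0 + C)%nat, (S d). intro n. eapply word_le_mono; [apply Hn|].
  assert (1 <= (n + 1) ^ d)%nat by (apply Nat.neq_0_lt_0, Nat.pow_nonzero; lia).
  rewrite Nat.pow_succ_r'. nia.
Qed.

Hypothesis f_triv : homologically_trivial G f.

Lemma poly_orbit_gamma c : (forall x, gamma G c x -> x = gone) ->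
  forall m x, gamma G (c - m) x -> poly_orbit f x.
Proof.
  intros Hc m. induction m as [|m IH]; intros x Hx.
  - rewrite Nat.sub_0_r in Hx. rewrite (Hc x Hx). apply poly_orbit_one.
  - apply poly_orbit_Delta, IH.
    destruct (Nat.le_gt_cases c m) as [Hle|Hlt].
    + replace (c - m)%nat with 0%nat by lia. exact I.
    + replace (c - m)%nat with (S (c - S m)) by lia. now apply Delta_gamma.
Qed.

Lemma poly_orbit_nilpotent : nilpotent G -> forall x, poly_orbit f x.
Proof.
  intros [c Hc] x. apply (poly_orbit_gamma c Hc c). rewrite Nat.sub_diag. exact I.
Qed.

End PolynomialGrowth.

Lemma lim_ln_div : is_lim_seq (fun n => ln (INR (n + 1)) / INR (n + 1)) 0.
Proof.
  apply (is_lim_comp_seq (fun y => ln y / y) (fun n => INR (n + 1)) p_infty 0).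
  - apply is_lim_div_ln_p.
  - exists 0%nat. intros n _. discriminate.
  - eapply is_lim_seq_ext; [|apply (proj1 (is_lim_seq_incr_1 INR p_infty)), is_lim_seq_INR].
    intro n. now rewrite Nat.add_1_r.
Qed.

Lemma lim_inv_INR : is_lim_seq (fun n => / INR n) 0.
Proof.
  replace (Finite 0) with (Rbar_inv p_infty) by reflexivity.
  apply is_lim_seq_inv; [apply is_lim_seq_INR | discriminate].
Qed.

Lemma ln_root_bound (C d n L : nat) : (1 <= n)%nat -> (1 <= L <= C * (n + 1) ^ d)%nat ->
  0 <= / INR n * ln (INR L) <=
  / INR n * ln (INR C) + 2 * INR d * (ln (INR (n + 1)) / INR (n + 1)).
Proof.
  intros Hn1 HL.
  assert (Hn : 1 <= INR n) by (apply (le_INR 1); lia).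
  assert (HLr : 1 <= INR L) by (apply (le_INR 1); lia).
  assert (HCr : 1 <= INR C) by (apply (le_INR 1); nia).
  assert (Hn1r : 0 < INR (n + 1)) by (rewrite plus_INR; simpl; lra).
  assert (Hinv : 0 < / INR n) by (apply Rinv_0_lt_compat; lra).
  assert (HlnL : 0 <= ln (INR L)) by (rewrite <- ln_1; apply ln_le; lra).
  assert (HlnC : 0 <= ln (INR C)) by (rewrite <- ln_1; apply ln_le; lra).
  assert (Hln1 : 0 <= ln (INR (n + 1))).
  { rewrite <- ln_1. apply ln_le; [lra|]. rewrite plus_INR; simpl; lra. }
  assert (Hd : 0 <= INR d) by apply pos_INR.
  assert (Hl : ln (INR L) <= ln (INR C) + INR d * ln (INR (n + 1))).
  { assert (HLb : INR L <= INR C * INR (n + 1) ^ d).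
    { rewrite <- pow_INR, <- mult_INR. apply le_INR. lia. }
    rewrite <- ln_pow, <- ln_mult; try lra. apply ln_le; lra. apply pow_lt; lra. }
  assert (Hq : / INR n <= 2 * / INR (n + 1)).
  { rewrite plus_INR. simpl. apply (Rmult_le_reg_l (INR n * (INR n + 1))); [nra|].
    field_simplify; lra. }
  split; [apply Rmult_le_pos; lra|].
  unfold Rdiv.
  apply Rle_trans with (/ INR n * (ln (INR C) + INR d * ln (INR (n + 1)))).
  - apply Rmult_le_compat_l; lra.
  - rewrite Rmult_plus_distr_l. apply Rplus_le_compat_l.
    assert (0 <= INR d * ln (INR (n + 1))) by nra. nra.
Qed.

Lemma nat_root_poly_lim (L : nat -> nat) (C d : nat) :
  (forall n, 1 <= L n <= C * (n + 1) ^ d)%nat -> Un_cv (fun n => nat_root (L n) n) 1.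
Proof.
  intro HL. apply is_lim_seq_Reals.
  set (t := fun n => / INR n * ln (INR (L n))).
  apply (is_lim_seq_ext (fun n => exp (t n))).
  { intro n. unfold nat_root, t. specialize (HL n). destruct (L n); [lia | reflexivity]. }
  rewrite <- exp_0.
  apply (is_lim_seq_continuous exp t 0); [apply derivable_continuous_pt, derivable_pt_exp|].
  apply (is_lim_seq_le_le_loc (fun _ => 0) t
           (fun n => / INR n * ln (INR C) + 2 * INR d * (ln (INR (n + 1)) / INR (n + 1)))).
  - exists 1%nat. intros n Hn. now apply ln_root_bound.
  - apply is_lim_seq_const.
  - replace (Finite 0) with (Finite (0 * ln (INR C) + 2 * INR d * 0)) by (f_equal; ring).
    apply is_lim_seq_plus'.
    + apply (is_lim_seq_ext (fun n => ln (INR C) * / INR n)); [intro n; apply Rmult_comm|].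
      replace (0 * ln (INR C)) with (ln (INR C) * 0) by ring.
      apply (is_lim_seq_scal_l _ _ 0), lim_inv_INR.
    + apply (is_lim_seq_scal_l _ _ 0), lim_ln_div.
Qed.

Lemma ex_least (P : nat -> Prop) :
  (exists n, P n) -> exists n, P n /\ forall m, P m -> (n <= m)%nat.
Proof.
  intros [n Hn]. revert Hn.
  induction n as [n IH] using (well_founded_induction Wf_nat.lt_wf). intro Hn.
  destruct (classic (exists m, P m /\ (m < n)%nat)) as [[m [Hm Hlt]]|Hno].
  - exact (IH m Hlt Hm).
  - exists n. split; [exact Hn|]. intros m Hm.
    destruct (Nat.le_gt_cases n m); [assumption|]. exfalso. eauto.
Qed.

Section WordLength.
Variables (G : Group) (gens : list G).
Hypothesis gens_gen : generates G gens.

Lemma word_length_spec g :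
  has_word_of_length G gens g (word_length G gens g) /\
  forall m, has_word_of_length G gens g m -> (word_length G gens g <= m)%nat.
Proof.
  unfold word_length. apply epsilon_spec, ex_least.
  destruct (gens_gen g) as [w [Hw E]]. exists (length w), w. auto.
Qed.

Lemma word_length_le g m : word_le G gens g m -> (word_length G gens g <= m)%nat.
Proof.
  intros [w [Hw [L E]]]. apply Nat.le_trans with (length w); [|exact L].
  apply (proj2 (word_length_spec g)). exists w. auto.
Qed.

Lemma word_length_pos g : g <> gone -> (1 <= word_length G gens g)%nat.
Proof.
  intro Hg. destruct (proj1 (word_length_spec g)) as [w [Hw [L E]]].
  destruct w; simpl in L; [|lia]. subst g. contradiction.
Qed.

Lemma nontrivial_generator :
  (exists g : G, g <> gone) -> exists s, In s gens /\ s <> gone.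
Proof.
  intros [g Hg]. apply NNPP. intro Hno. apply Hg.
  destruct (gens_gen g) as [w [Hw <-]]. clear Hg.
  induction Hw as [|[b s] w Hs Hw IH]; simpl; [reflexivity|].
  assert (Es : s = gone) by (apply NNPP; intro Hs'; apply Hno; eauto).
  rewrite Es, IH. destruct b; rewrite ?ginv_one; apply gmul_1l.
Qed.

End WordLength.

Section Entropy.
Variables (G : Group) (gens : list G) (f : G -> G).
Hypotheses (gens_gen : generates G gens) (f_hom : is_hom G f).

Lemma entropy_seq_one : Un_cv (entropy_seq G gens f gone) 0.
Proof.
  intros e He. exists 0%nat. intros n _.
  unfold entropy_seq. rewrite (iter_hom_one G f f_hom).
  replace (word_length G gens gone) with 0%nat.
  - unfold R_dist, nat_root. rewrite Rminus_0_r, Rabs_R0. exact He.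
  - symmetry. apply Nat.le_0_r, (word_length_le G gens gens_gen), word_le_one.
Qed.

Lemma entropy_seq_poly s : (forall x y, f x = f y -> x = y) ->
  s <> gone -> poly_orbit G gens f s -> Un_cv (entropy_seq G gens f s) 1.
Proof.
  intros f_inj Hs [C [d HB]].
  apply (nat_root_poly_lim (fun n => word_length G gens (Nat.iter n f s)) C d).
  intro n. split.
  - apply (word_length_pos G gens gens_gen). induction n as [|n IH]; [exact Hs|].
    intro E. apply IH, f_inj. simpl in E. now rewrite E, (hom_one G f f_hom).
  - apply (word_length_le G gens gens_gen), HB.
Qed.

End Entropy.

Theorem corollary1p4 (N : Group) (S : list N) (phi : N -> N) :
  generates N S ->
  nilpotent N ->
  torsion_free N ->
  (exists g : N, g <> gone) ->
  is_automorphism N phi ->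
  homologically_trivial N phi ->
  entropy_is N S phi 1%R.
Proof.
  intros Hgen Hnil _ Hnontriv [Hhom [Hinj _]] Htriv.
  (* every orbit grows polynomially, so nontrivial elements give the limit 1 *)
  assert (Hlim1 : forall s, s <> gone -> Un_cv (entropy_seq N S phi s) 1).
  { intros s Hs. apply entropy_seq_poly; auto.
    now apply poly_orbit_nilpotent. }
  split.
  - intros s _. destruct (classic (s = gone)) as [->|Hs].
    + exists 0. split; [now apply entropy_seq_one | lra].
    + exists 1. split; [now apply Hlim1 | lra].
  - destruct (nontrivial_generator N S Hgen Hnontriv) as [s [Hin Hs]].
    exists s. split; [exact Hin | now apply Hlim1].
Qed.
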